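(* Let $A$ be a ring with a nilpotent two-sided ideal $\mathfrak{a}$, and assume the ring $\operatorname{gr}_{\mathfrak{a}}(A)=\bigoplus_{i\ge0}\mathfrak{a}^i/\mathfrak{a}^{i+1}$ is commutative. Let $s\in A$. (1) The set $\{s^j\}_{j\ge0}$ is a denominator set in $A$; let $A_s$ be the resulting ring of fractions. (2) Let $\bar A:=A/\mathfrak{a}$, let $\bar s$ be the image of $s$ in $\bar A$, and let $\mathfrak{a}_s$ be the kernel of the canonical ring surjection $A_s\to\bar A_{\bar s}$. Then $\mathfrak{a}_s=\mathfrak{a}A_s=A_s\mathfrak{a}$, and this is a nilpotent ideal. (3) For any $a\in A$ with image $\bar a\in\bar A$, the element $a$ is invertible in $A_s$ if and only if $\bar a$ is invertible in $\bar A_{\bar s}$.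
   Context: A subset $S$ of a ring $A$ is a denominator set if it is multiplicatively closed and satisfies the left and right Ore conditions and the left and right torsion conditions; then the (Ore) ring of fractions $A_S$ exists, with $A\to A_S$ making elements of $S$ invertible, universal for this property, with every element of the form $a_1s_1^{-1}=s_2^{-1}a_2$. *)

From HB Require Import structures.
From mathcomp Require Import all_boot all_order all_algebra.
Set Implicit Arguments. Unset Strict Implicit. Unset Printing Implicit Defensive.
Import GRing.Theory.
Local Open Scope ring_scope.

Section Defs.
Variable T : pzRingType.

Definition is_ideal (I : T -> Prop) : Prop :=
  [/\ I 0, (forall x y, I x -> I y -> I (x + y)) &
      (forall x y, I y -> I (x * y) /\ I (y * x))].

(* ideal power I^n : I^0 = T, I^(n+1) = additive span of {x*y | x in I^n, y in I} *)
Inductive ipow (I : T -> Prop) : nat -> T -> Prop :=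
| ipow_0 x : ipow I 0 x
| ipow_zero n : ipow I n.+1 0
| ipow_mul n x y : ipow I n x -> I y -> ipow I n.+1 (x * y)
| ipow_add n x y : ipow I n.+1 x -> ipow I n.+1 y -> ipow I n.+1 (x + y).

Definition nilpotent_ideal (I : T -> Prop) : Prop :=
  exists n, forall x, ipow I n x -> x = 0.

(* gr_I(T) = (+)_i I^i/I^(i+1) is commutative: the product of the classes of
   homogeneous elements x in I^i, y in I^j, namely the class of xy in
   I^(i+j)/I^(i+j+1), equals that of yx (homogeneous elements generate). *)
Definition gr_commutative (I : T -> Prop) : Prop :=
  forall i j x y, ipow I i x -> ipow I j y -> ipow I (i + j).+1 (x * y - y * x).

Definition is_unit (x : T) : Prop := exists y, x * y = 1 /\ y * x = 1.

Definition powers (s : T) : T -> Prop := fun t => exists j : nat, t = s ^+ j.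

Definition mult_closed (S : T -> Prop) : Prop :=
  S 1 /\ (forall x y, S x -> S y -> S (x * y)).

Definition right_ore (S : T -> Prop) : Prop :=
  forall a s, S s -> exists b t, S t /\ a * t = s * b.
Definition left_ore (S : T -> Prop) : Prop :=
  forall a s, S s -> exists b t, S t /\ t * a = b * s.
Definition right_torsion (S : T -> Prop) : Prop :=
  forall a s, S s -> s * a = 0 -> exists t, S t /\ a * t = 0.
Definition left_torsion (S : T -> Prop) : Prop :=
  forall a s, S s -> a * s = 0 -> exists t, S t /\ t * a = 0.

Definition denominator_set (S : T -> Prop) : Prop :=
  [/\ mult_closed S, left_ore S, right_ore S, left_torsion S & right_torsion S].
End Defs.

Definition ring_of_fractions (A B : pzRingType) (S : A -> Prop)
    (f : {rmorphism A -> B}) : Prop :=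
  [/\ (forall s, S s -> is_unit (f s)),
      (forall (C : pzRingType) (g : {rmorphism A -> C}),
          (forall s, S s -> is_unit (g s)) ->
          (exists h : {rmorphism B -> C}, forall a, h (f a) = g a) /\
          (forall h1 h2 : {rmorphism B -> C},
              (forall a, h1 (f a) = g a) -> (forall a, h2 (f a) = g a) ->
              forall b, h1 b = h2 b)) &
      (forall b : B, (exists a1 s1 u1, [/\ S s1, f s1 * u1 = 1, u1 * f s1 = 1
                                          & b = f a1 * u1]) /\
                     (exists a2 s2 u2, [/\ S s2, f s2 * u2 = 1, u2 * f s2 = 1
                                          & b = u2 * f a2]))].

(* I.B : the right ideal of B generated by f(I) (finite sums of f(x) b) *)
Inductive right_ext (A B : pzRingType) (f : A -> B) (I : A -> Prop) : B -> Prop :=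
| rext_0 : right_ext f I 0
| rext_mul x b : I x -> right_ext f I (f x * b)
| rext_add u v : right_ext f I u -> right_ext f I v -> right_ext f I (u + v).

(* B.I : the left ideal of B generated by f(I) *)
Inductive left_ext (A B : pzRingType) (f : A -> B) (I : A -> Prop) : B -> Prop :=
| lext_0 : left_ext f I 0
| lext_mul x b : I x -> left_ext f I (b * f x)
| lext_add u v : left_ext f I u -> left_ext f I v -> left_ext f I (u + v).

From HB Require Import structures.
From mathcomp Require Import all_boot all_order all_algebra.
From Stdlib Require Import ClassicalEpsilon FunctionalExtensionality PropExtensionality.
Import GRing.Theory.
Local Open Scope ring_scope.
Set Implicit Arguments. Unset Strict Implicit. Unset Printing Implicit Defensive.

(* Since gr_I(A) is commutative, the map a |-> s a - a s raises the I-adic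
   degree by one; as I is nilpotent, descending induction on the degree gives
   the Ore and torsion conditions for the powers of s, the left-handed ones
   following by passing to the converse ring.  The same Ore conditions move
   denominators across elements of I, so I A_s = A_s I is an ideal whose n-th
   power is I^n A_s, hence it is nilpotent; the universal properties identify
   it with the kernel of A_s -> Abar_s.  Finally, units lift along a
   surjection with nil kernel. *)

Section Ideals.
Variables (T : pzRingType) (I : T -> Prop).
Hypothesis HI : is_ideal I.

Lemma ideal0 : I 0. Proof. by case: HI. Qed.

Lemma idealD x y : I x -> I y -> I (x + y). Proof. by case: HI => _ + _; apply. Qed.

Lemma idealMl x y : I y -> I (x * y).
Proof. by case: HI => _ _ HM /(HM x) []. Qed.

Lemma idealMr x y : I x -> I (x * y).
Proof. by case: HI => _ _ HM /(HM y) []. Qed.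

Lemma idealN x : I x -> I (- x).
Proof. by rewrite -mulN1r; apply: idealMl. Qed.

Lemma idealB x y : I x -> I y -> I (x - y).
Proof. by move=> Ix Iy; apply/idealD/idealN. Qed.

End Ideals.

Section IdealPowers.
Variables (T : pzRingType) (I : T -> Prop).

Lemma ipow0 n : ipow I n 0.
Proof. by case: n => [|n]; constructor. Qed.

Lemma ipowD n x y : ipow I n x -> ipow I n y -> ipow I n (x + y).
Proof. by case: n => [|n] Hx Hy; constructor. Qed.

Lemma ipowMl n x z : ipow I n x -> ipow I n (z * x).
Proof.
elim=> {n x} [x|n|n x y _ IHx Iy|n x y _ IHx _ IHy].
- by constructor.
- by rewrite mulr0; constructor.
- by rewrite mulrA; constructor.
- by rewrite mulrDr; constructor.
Qed.

Lemma sub_ipow (J : T -> Prop) n x :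
  (forall y, I y -> J y) -> ipow I n x -> ipow J n x.
Proof.
move=> IJ; elim=> {n x} [x|n|n x y _ IHx Iy|n x y _ IHx _ IHy]; constructor => //.
exact: IJ.
Qed.

Lemma ipowX z k : I z -> ipow I k (z ^+ k).
Proof.
move=> Iz; elim: k => [|k IHk]; first by constructor.
by rewrite exprSr; constructor.
Qed.

Hypothesis HI : is_ideal I.

Lemma ipowMr n x z : ipow I n x -> ipow I n (x * z).
Proof.
elim=> {n x} [x|n|n x y Hx _ Iy|n x y _ IHx _ IHy].
- by constructor.
- by rewrite mul0r; constructor.
- by rewrite -mulrA; exact: ipow_mul Hx (idealMr HI z Iy).
- by rewrite mulrDl; constructor.
Qed.

Lemma ipowN n x : ipow I n x -> ipow I n (- x).
Proof. by rewrite -mulrN1; apply: ipowMr. Qed.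

Lemma ipowB n x y : ipow I n x -> ipow I n y -> ipow I n (x - y).
Proof. by move=> Hx Hy; apply/ipowD/ipowN. Qed.

Lemma ipowM m n x y : ipow I m x -> ipow I n y -> ipow I (m + n) (x * y).
Proof.
move=> Hx; elim=> {n y} [y|n|n y z _ IHy Iz|n y z _ IHy _ IHz].
- by rewrite addn0; apply: ipowMr.
- by rewrite mulr0; apply: ipow0.
- by rewrite addnS mulrA; constructor.
- by rewrite mulrDr; apply: ipowD.
Qed.

Lemma ipowS n x : ipow I n.+1 x -> ipow I n x.
Proof.
suff Hpred m : ipow I m x -> forall k, m = k.+1 -> ipow I k x by move/Hpred; apply.
elim=> {m x} [x|m|m x y Hx _ _|m x y _ IHx _ IHy] k //.
- by move=> _; apply: ipow0.
- by case=> <-; apply: ipowMr.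
- by move=> Em; apply: ipowD; [apply: IHx | apply: IHy].
Qed.

Lemma ipow_le m n x : (m <= n)%N -> ipow I n x -> ipow I m x.
Proof.
move=> /subnK <-; elim: (n - m)%N => [|k IHk] // /ipowS; exact: IHk.
Qed.

Lemma ipow1 x : ipow I 1 x <-> I x.
Proof.
split; last by move=> Ix; rewrite -(mul1r x); exact: ipow_mul (ipow_0 I 1) Ix.
suff H1 m : ipow I m x -> m = 1%N -> I x by move/H1; apply.
elim=> {m x} [x|m|m x y _ _ Iy|m x y _ IHx _ IHy] //.
- by move=> _; apply: ideal0.
- by move=> _; apply: idealMl.
- by move=> Em; apply: (idealD HI); [exact: IHx | exact: IHy].
Qed.

End IdealPowers.

Section Ore.
Variables (R : pzRingType) (I : R -> Prop) (N : nat) (s : R).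
Hypotheses (HI : is_ideal I) (HN : forall x, ipow I N x -> x = 0).
Hypothesis Hgr : gr_commutative I.

Lemma ipow_commr k a : ipow I k a -> ipow I k.+1 (s * a - a * s).
Proof. by move/(Hgr (ipow_0 I s)). Qed.

(* The downward induction on k terminates because I^N = 0. *)
Lemma ipow_ind_down (P : nat -> R -> Prop) :
  (forall k, P k 0) ->
  (forall k a, (forall b, ipow I k.+1 b -> P k.+1 b) -> ipow I k a -> P k a) ->
  forall k a, ipow I k a -> P k a.
Proof.
move=> P0 PS; suff Hd d k : (N <= k + d)%N -> forall a, ipow I k a -> P k a.
  by move=> k; apply: (Hd N); rewrite leq_addl.
elim: d k => [|d IHd] k Hk a Ha.
  by rewrite addn0 in Hk; rewrite (HN (ipow_le HI Hk Ha)).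
by apply: PS Ha => b; apply: IHd; rewrite addSn -addnS.
Qed.

Lemma right_ore_step k a :
  ipow I k a -> exists m b, ipow I k b /\ a * s ^+ m = s * b.
Proof.
move: k a; apply: ipow_ind_down => [k|k a IHk Ha].
  by exists 0%N, 0; rewrite mul0r mulr0; split; first exact: ipow0.
have [m [b [Hb Eb]]] := IHk _ (ipow_commr Ha).
exists m.+1, (a * s ^+ m - b); split.
  by apply: ipowB => //; [apply: ipowMr | apply: ipowS].
by rewrite exprS mulrBr -Eb mulrBl !mulrA opprB addrC subrK.
Qed.

Lemma right_ore_ipow k a j :
  ipow I k a -> exists m b, ipow I k b /\ a * s ^+ m = s ^+ j * b.
Proof.
move=> Ha; elim: j => [|j [m [b [Hb Eb]]]]; first by exists 0%N, a; rewrite mulr1 mul1r.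
have [m' [b' [Hb' Eb']]] := right_ore_step Hb.
exists (m + m')%N, b'; split => //.
by rewrite exprD mulrA Eb -mulrA Eb' mulrA -exprSr.
Qed.

Lemma right_torsion_ipow k a j :
  ipow I k a -> s ^+ j * a = 0 -> exists m, a * s ^+ m = 0.
Proof.
move: k a; apply: ipow_ind_down => [k _|k a IHk Ha Ea]; first by exists 0%N; rewrite mul0r.
have [m Em] : exists m, (s * a - a * s) * s ^+ m = 0.
  apply: IHk (ipow_commr Ha) _.
  by rewrite mulrBr mulrA -exprSr exprS -mulrA Ea mulr0 mulrA Ea mul0r subrr.
have Cs : GRing.comm (a * s ^+ m) s.
  apply/eqP; rewrite /GRing.comm -subr_eq0 -mulrA -exprSr exprS !mulrA.
  by rewrite -mulrBl -opprB mulNr Em oppr0.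
by exists (m + j)%N; rewrite exprD mulrA (commrX j Cs) mulrA Ea mul0r.
Qed.

End Ore.

Section Converse.
Variables (R : pzRingType) (I : R -> Prop).
Hypothesis HI : is_ideal I.

Lemma is_ideal_converse : @is_ideal R^c I.
Proof. by case: HI => I0 ID IM; split=> // x y /(IM x) []. Qed.

Lemma ipow_converse n x : @ipow R^c I n x <-> ipow I n x.
Proof.
split; elim=> {n x} [x|n|n x y _ IHx Iy|n x y _ IHx _ IHy].
- exact: ipow_0.
- exact: ipow0.
- exact (ipowM HI (proj2 (ipow1 HI y) Iy) IHx).
- exact (ipowD IHx IHy).
- exact: ipow_0.
- exact: (@ipow0 R^c).
- exact (ipowM is_ideal_converse (proj2 (ipow1 is_ideal_converse y) Iy) IHx).
- exact (@ipowD R^c _ _ _ _ IHx IHy).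
Qed.

Lemma gr_commutative_converse : gr_commutative I -> @gr_commutative R^c I.
Proof.
move=> Hgr i j x y /ipow_converse Hx /ipow_converse Hy.
by apply/ipow_converse; rewrite addnC; exact: Hgr Hy Hx.
Qed.

End Converse.

Section LeftOre.
Variables (R : pzRingType) (I : R -> Prop) (N : nat) (s : R).
Hypotheses (HI : is_ideal I) (HN : forall x, ipow I N x -> x = 0).
Hypothesis Hgr : gr_commutative I.

Let HIc : @is_ideal R^c I := is_ideal_converse HI.
Let Hgrc : @gr_commutative R^c I := gr_commutative_converse HI Hgr.
Let HNc x : @ipow R^c I N x -> x = 0.
Proof. by move/(ipow_converse HI)/HN. Qed.

Lemma left_ore_ipow k a j :
  ipow I k a -> exists m b, ipow I k b /\ s ^+ m * a = b * s ^+ j.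
Proof.
move/(ipow_converse HI)/(@right_ore_ipow R^c _ _ s HIc HNc Hgrc _ _ j).
case=> m [b [/(ipow_converse HI) Hb]]; rewrite !revrX => Eb.
by exists m, b.
Qed.

Lemma left_torsion_ipow k a j :
  ipow I k a -> a * s ^+ j = 0 -> exists m, s ^+ m * a = 0.
Proof.
move=> /(ipow_converse HI) Ha Ea.
have Ec : (s : R^c) ^+ j * a = 0 by rewrite revrX.
have [m] := @right_torsion_ipow R^c _ _ s HIc HNc Hgrc _ _ _ Ha Ec.
by rewrite revrX; exists m.
Qed.

Lemma powers_denominator_set : denominator_set (powers s).
Proof.
split.
- split; first by exists 0%N.
  by move=> _ _ [i ->] [j ->]; exists (i + j)%N; rewrite exprD.
- move=> a _ [j ->]; have [m [b [_ Eb]]] := left_ore_ipow j (ipow_0 I a).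
  by exists b, (s ^+ m); split; first exists m.
- move=> a _ [j ->]; have [m [b [_ Eb]]] := right_ore_ipow s HI HN Hgr j (ipow_0 I a).
  by exists b, (s ^+ m); split; first exists m.
- move=> a _ [j ->] Ea; have [m Em] := left_torsion_ipow (ipow_0 I a) Ea.
  by exists (s ^+ m); split; first exists m.
- move=> a _ [j ->] Ea; have [m Em] := right_torsion_ipow HI HN Hgr (ipow_0 I a) Ea.
  by exists (s ^+ m); split; first exists m.
Qed.

End LeftOre.

Record twosided_ideal (T : pzRingType) :=
  TwoSidedIdeal { ideal_mem : T -> Prop; idealP : is_ideal ideal_mem }.

Section Quotient.
Variables (T : pzRingType) (K : twosided_ideal T).
Local Notation J := (ideal_mem K).
Local Notation HJ := (idealP K).

Definition qrep (x : T) : T := epsilon (inhabits 0) (fun y => J (y - x)).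

Lemma qrepP x : J (qrep x - x).
Proof.
apply: (epsilon_spec (inhabits 0) (fun y => J (y - x))).
by exists x; rewrite subrr; exact: ideal0 HJ.
Qed.

Lemma qrep_eq x y : J (x - y) -> qrep x = qrep y.
Proof.
move=> Jxy; congr epsilon; apply: functional_extensionality => z.
apply: propositional_extensionality; split=> Jz.
  by have := idealD HJ Jz Jxy; rewrite addrA subrK.
by have := idealB HJ Jz Jxy; rewrite opprB addrA subrK.
Qed.

Lemma qrep_id x : qrep (qrep x) = qrep x.
Proof. exact/qrep_eq/qrepP. Qed.

Definition quot := {x : T | qrep x == x}.

Definition qpi (x : T) : quot := exist _ (qrep x) (introT eqP (qrep_id x)).

Lemma qpiK (a : quot) : qpi (val a) = a.
Proof. by apply: val_inj; apply/eqP; case: a. Qed.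

Lemma qpi_eq x y : qpi x = qpi y <-> J (x - y).
Proof.
split=> [/(congr1 val) /= Exy|]; last by move=> Jxy; apply: val_inj; apply: qrep_eq.
have := idealB HJ (qrepP y) (qrepP x).
by rewrite Exy opprB addrC addrA subrK.
Qed.

Let add_quot (a b : quot) := qpi (val a + val b).
Let opp_quot (a : quot) := qpi (- val a).
Let mul_quot (a b : quot) := qpi (val a * val b).

Lemma qpiD x y : add_quot (qpi x) (qpi y) = qpi (x + y).
Proof. by apply/qpi_eq => /=; rewrite opprD addrACA; apply/(idealD HJ)/qrepP/qrepP. Qed.

Lemma qpiN x : opp_quot (qpi x) = qpi (- x).
Proof. by apply/qpi_eq => /=; rewrite opprK addrC -opprB; apply/(idealN HJ)/qrepP. Qed.

Lemma qpiM x y : mul_quot (qpi x) (qpi y) = qpi (x * y).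
Proof.
apply/qpi_eq => /=.
have -> : qrep x * qrep y - x * y = (qrep x - x) * qrep y + x * (qrep y - y).
  by rewrite mulrBl mulrBr addrA subrK.
by apply: (idealD HJ); [apply/(idealMr HJ)/qrepP | apply/(idealMl HJ)/qrepP].
Qed.

Lemma quot_addA : associative add_quot.
Proof. by move=> a b c; rewrite -[a]qpiK -[b]qpiK -[c]qpiK !qpiD addrA. Qed.
Lemma quot_addC : commutative add_quot.
Proof. by move=> a b; rewrite -[a]qpiK -[b]qpiK !qpiD addrC. Qed.
Lemma quot_add0 : left_id (qpi 0) add_quot.
Proof. by move=> a; rewrite -[a]qpiK qpiD add0r. Qed.
Lemma quot_addN : left_inverse (qpi 0) opp_quot add_quot.
Proof. by move=> a; rewrite -[a]qpiK qpiN qpiD addNr. Qed.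
Lemma quot_mulA : associative mul_quot.
Proof. by move=> a b c; rewrite -[a]qpiK -[b]qpiK -[c]qpiK !qpiM mulrA. Qed.
Lemma quot_mul1 : left_id (qpi 1) mul_quot.
Proof. by move=> a; rewrite -[a]qpiK qpiM mul1r. Qed.
Lemma quot_mulr1 : right_id (qpi 1) mul_quot.
Proof. by move=> a; rewrite -[a]qpiK qpiM mulr1. Qed.
Lemma quot_mulDl : left_distributive mul_quot add_quot.
Proof. by move=> a b c; rewrite -[a]qpiK -[b]qpiK -[c]qpiK !(qpiD, qpiM) mulrDl. Qed.
Lemma quot_mulDr : right_distributive mul_quot add_quot.
Proof. by move=> a b c; rewrite -[a]qpiK -[b]qpiK -[c]qpiK !(qpiD, qpiM) mulrDr. Qed.

HB.instance Definition _ := Choice.on quot.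
HB.instance Definition _ := GRing.isPzRing.Build quot quot_addA quot_addC quot_add0
  quot_addN quot_mulA quot_mul1 quot_mulr1 quot_mulDl quot_mulDr.

Lemma qpi_zmod_morphism : zmod_morphism qpi.
Proof. by move=> x y; rewrite -[RHS]/(add_quot (qpi x) (opp_quot (qpi y))) qpiN qpiD. Qed.
HB.instance Definition _ := GRing.isZmodMorphism.Build T quot qpi qpi_zmod_morphism.

Lemma qpi_monoid_morphism : GRing.monoid_morphism qpi.
Proof. by split=> // x y; rewrite -[RHS]/(mul_quot (qpi x) (qpi y)) qpiM. Qed.
HB.instance Definition _ := GRing.isMonoidMorphism.Build T quot qpi qpi_monoid_morphism.

Lemma qpi_eq0 x : qpi x = 0 <-> J x.
Proof. by rewrite -[0]/(qpi 0) qpi_eq subr0. Qed.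

End Quotient.

Section Factor.
Variables (A B C : pzRingType) (pi : {rmorphism A -> B}) (h : {rmorphism A -> C}).

Definition factor (_ : forall y, exists x, pi x = y) (_ : forall x, pi x = 0 -> h x = 0)
    (y : B) : C :=
  h (epsilon (inhabits 0) (fun x => pi x = y)).

Hypotheses (pi_surj : forall y, exists x, pi x = y) (pi_h : forall x, pi x = 0 -> h x = 0).
Local Notation hbar := (factor pi_surj pi_h).

Lemma factorE x : hbar (pi x) = h x.
Proof.
have piE := epsilon_spec (inhabits 0) (fun z => pi z = pi x) (pi_surj (pi x)).
by apply/eqP; rewrite -subr_eq0 -rmorphB pi_h // rmorphB piE subrr.
Qed.

Lemma factor_zmod_morphism : zmod_morphism hbar.
Proof.
move=> y1 y2; have [x1 <-] := pi_surj y1; have [x2 <-] := pi_surj y2.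
by rewrite -rmorphB !factorE rmorphB.
Qed.
HB.instance Definition _ := GRing.isZmodMorphism.Build B C hbar factor_zmod_morphism.

Lemma factor_monoid_morphism : GRing.monoid_morphism hbar.
Proof.
split; first by rewrite -(rmorph1 pi) factorE rmorph1.
move=> y1 y2; have [x1 <-] := pi_surj y1; have [x2 <-] := pi_surj y2.
by rewrite -rmorphM !factorE rmorphM.
Qed.
HB.instance Definition _ := GRing.isMonoidMorphism.Build B C hbar factor_monoid_morphism.

End Factor.

Section Units.
Variables R S : pzRingType.

Lemma is_unit_rmorph (h : {rmorphism R -> S}) x : is_unit x -> is_unit (h x).
Proof. by case=> y [xy yx]; exists (h y); rewrite -!rmorphM xy yx rmorph1. Qed.

Lemma linv_eq_rinv (x l r : R) : l * x = 1 -> x * r = 1 -> l = r.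
Proof. by move=> lx xr; rewrite -[l]mulr1 -xr mulrA lx mul1r. Qed.

Lemma is_unit_1Bnil (z : R) n : z ^+ n = 0 -> is_unit (1 - z).
Proof.
move=> zn0; exists (\sum_(i < n) z ^+ i).
have zS : GRing.comm z (\sum_(i < n) z ^+ i).
  by apply: commr_sum => i _; apply/commrX/commr_refl.
have -> : (\sum_(i < n) z ^+ i) * (1 - z) = (1 - z) * \sum_(i < n) z ^+ i.
  exact/commrB/commr_sym/zS/commr1.
by rewrite -opprB mulNr -subrX1 zn0 sub0r opprK.
Qed.

Lemma is_unit_lift (phi : {rmorphism R -> S}) :
    (forall y, exists x, phi x = y) -> (forall z, phi z = 0 -> exists n, z ^+ n = 0) ->
  forall x, is_unit (phi x) -> is_unit x.
Proof.
move=> phi_surj phi_nil x [w [xw wx]]; have [v phiv] := phi_surj w.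
have unit_of k : phi k = 1 -> is_unit k.
  move=> phik; have [n zn0] : exists n, (1 - k) ^+ n = 0.
    by apply: phi_nil; rewrite rmorphB rmorph1 phik subrr.
  by rewrite -[k](subKr 1); apply: is_unit_1Bnil zn0.
have [y [xvy _]] : is_unit (x * v) by apply: unit_of; rewrite rmorphM phiv.
have [y' [_ y'vx]] : is_unit (v * x) by apply: unit_of; rewrite rmorphM phiv.
have xr : x * (v * y) = 1 by rewrite mulrA.
have lx : (y' * v) * x = 1 by rewrite -mulrA.
by exists (v * y); split; last rewrite -(linv_eq_rinv lx xr).
Qed.

End Units.

Lemma right_ext_mulr (A B : pzRingType) (f : A -> B) (I : A -> Prop) z c :
  right_ext f I z -> right_ext f I (z * c).
Proof.
elim=> [|x b Ix|u v _ IHu _ IHv].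
- by rewrite mul0r; constructor.
- by rewrite -mulrA; constructor.
- by rewrite mulrDl; constructor.
Qed.

Lemma is_ideal_kernel (R S : pzRingType) (phi : {rmorphism R -> S}) :
  is_ideal (fun x => phi x = 0).
Proof.
split=> [|x y phix phiy|x y phiy]; first exact: rmorph0.
  by rewrite rmorphD phix phiy addr0.
by rewrite !rmorphM phiy mulr0 mul0r.
Qed.

Section FractionsModuloNilpotent.
Variables (A : pzRingType) (I : A -> Prop) (N : nat) (s : A).
Hypotheses (HI : is_ideal I) (HN : forall x, ipow I N x -> x = 0).
Hypothesis Hgr : gr_commutative I.
Variables (As : pzRingType) (f : {rmorphism A -> As}).
Hypothesis Hf : ring_of_fractions (powers s) f.
Variables (Abar : pzRingType) (pi : {rmorphism A -> Abar}).
Hypotheses (pi_surj : forall y, exists x, pi x = y) (pi_ker : forall x, pi x = 0 <-> I x).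
Variables (Abars : pzRingType) (g : {rmorphism Abar -> Abars}).
Hypothesis Hg : ring_of_fractions (powers (pi s)) g.
Variable phi : {rmorphism As -> Abars}.
Hypothesis phi_f : forall x, phi (f x) = g (pi x).

Local Notation Ir := (right_ext f I).
Local Notation Il := (left_ext f I).

Lemma is_unit_f_powers t : powers s t -> is_unit (f t).
Proof. by case: Hf => Hu _ _; apply: Hu. Qed.

(* The Ore conditions move a denominator across an element of I. *)
Lemma right_ext_fraction y u j : I y -> u * f (s ^+ j) = 1 -> Ir (u * f y).
Proof.
move=> /(ipow1 HI) Iy uf.
have [m [y' [/(ipow1 HI) Iy' Ey]]] := right_ore_ipow s HI HN Hgr j Iy.
have [w [fw _]] : is_unit (f (s ^+ m)) by apply: is_unit_f_powers; exists m.
have -> : u * f y = u * f (y * s ^+ m) * w by rewrite rmorphM -!mulrA fw mulr1.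
by rewrite Ey rmorphM mulrA uf mul1r; constructor.
Qed.

Lemma left_ext_fraction y u j : I y -> f (s ^+ j) * u = 1 -> Il (f y * u).
Proof.
move=> /(ipow1 HI) Iy fu.
have [m [y' [/(ipow1 HI) Iy' Ey]]] := left_ore_ipow s HI HN Hgr j Iy.
have [w [_ wf]] : is_unit (f (s ^+ m)) by apply: is_unit_f_powers; exists m.
have -> : f y * u = w * f (s ^+ m * y) * u by rewrite rmorphM !mulrA wf mul1r.
by rewrite Ey rmorphM -!mulrA fu mulr1; constructor.
Qed.

Lemma right_ext_mull b z : Ir z -> Ir (b * z).
Proof.
elim=> [|x c Ix|u v _ IHu _ IHv].
- by rewrite mulr0; constructor.
- case: Hf => _ _ /(_ b) [_ [a [_ [u [[j ->] _ uf ->]]]]].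
  have -> : u * f a * (f x * c) = u * f (a * x) * c by rewrite rmorphM !mulrA.
  apply: right_ext_mulr; apply: right_ext_fraction uf; exact: idealMl.
- by rewrite mulrDr; constructor.
Qed.

Lemma right_ext_ideal : is_ideal Ir.
Proof.
split=> [|x y|x y Iy]; [exact: rext_0 | exact: rext_add |].
by split; [apply: right_ext_mull | apply: right_ext_mulr].
Qed.

Lemma right_ext_sub_left z : Ir z -> Il z.
Proof.
elim=> [|x b Ix|u v _ IHu _ IHv]; [exact: lext_0 | | exact: lext_add].
case: Hf => _ _ /(_ b) [[a [_ [u [[j ->] fu _ ->]]]] _].
by rewrite mulrA -rmorphM; apply: left_ext_fraction fu; exact: idealMr.
Qed.

Lemma left_ext_sub_right z : Il z -> Ir z.
Proof.
elim=> [|x b Ix|u v _ IHu _ IHv]; [exact: rext_0 | | exact: rext_add].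
case: Hf => _ _ /(_ b) [_ [a [_ [u [[j ->] _ uf ->]]]]].
by rewrite -mulrA -rmorphM; apply: right_ext_fraction uf; exact: idealMl.
Qed.

Lemma right_ext_sub_ker z : Ir z -> phi z = 0.
Proof.
elim=> [|x b /pi_ker pix|u v _ phiu _ phiv]; first exact: rmorph0.
  by rewrite rmorphM phi_f pix rmorph0 mul0r.
by rewrite rmorphD phiu phiv addr0.
Qed.

(* The quotient map As -> As/(I As) sends s to a unit and kills I, so by the
   universal properties of Abar and Abar_s it factors through phi. *)
Lemma ker_sub_right_ext z : phi z = 0 -> Ir z.
Proof.
move=> phiz; pose q : {rmorphism As -> quot (TwoSidedIdeal right_ext_ideal)} := qpi _.
pose h : {rmorphism A -> _} := (q \o f)%FUN.
have pi_h x : pi x = 0 -> h x = 0.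
  by move/pi_ker => Ix; apply/qpi_eq0; rewrite -[f x]mulr1; constructor.
have h_unit t : powers s t -> is_unit (h t).
  by move/is_unit_f_powers; apply: is_unit_rmorph.
pose hbar : {rmorphism Abar -> _} := factor pi_surj pi_h.
have hbarE x : hbar (pi x) = h x := factorE pi_surj pi_h x.
have hbar_unit t : powers (pi s) t -> is_unit (hbar t).
  by case=> j ->; rewrite -rmorphXn hbarE; apply: h_unit; exists j.
case: Hg => _ /(_ _ hbar hbar_unit) [[k kg] _] _.
case: Hf => _ /(_ _ h h_unit) [_ h_uniq] _.
have kphi a : (k \o phi)%FUN (f a) = h a by rewrite /= phi_f kg hbarE.
have := h_uniq _ q kphi (fun=> erefl) z.
by rewrite /= phiz rmorph0 => /esym /qpi_eq0.
Qed.

Lemma ker_phi z : phi z = 0 <-> Ir z.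
Proof. by split; [apply: ker_sub_right_ext | apply: right_ext_sub_ker]. Qed.

Lemma right_ext_ipowM n x y :
  right_ext f (ipow I n) x -> Ir y -> right_ext f (ipow I n.+1) (x * y).
Proof.
elim=> [|a b Ha|u v _ IHu _ IHv] Iy.
- by rewrite mul0r; constructor.
- rewrite -mulrA; elim: (right_ext_mull b Iy) => [|c d Ic|u v _ IHu _ IHv].
  + by rewrite mulr0; constructor.
  + by rewrite mulrA -rmorphM; constructor; constructor.
  + by rewrite mulrDr; constructor.
- by rewrite mulrDl; constructor; [apply: IHu | apply: IHv].
Qed.

Lemma ipow_right_ext n x : ipow Ir n x -> right_ext f (ipow I n) x.
Proof.
elim=> {n x} [x|n|n x y _ IHx Iy|n x y _ IHx _ IHy].
- by rewrite -[x]mul1r -(rmorph1 f); constructor; constructor.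
- by constructor.
- exact: right_ext_ipowM.
- by constructor.
Qed.

Lemma ker_phi_nilpotent x : ipow (fun z => phi z = 0) N x -> x = 0.
Proof.
move=> /(sub_ipow (fun z => proj1 (ker_phi z))) /ipow_right_ext.
elim=> [|a b /HN ->|u v _ -> _ ->]; [by [] | by rewrite rmorph0 mul0r | exact: addr0].
Qed.

Lemma phi_surj y : exists x, phi x = y.
Proof.
case: Hg => _ _ /(_ y) [[a [_ [u [[j ->] gu _ ->]]]] _].
have [x <-] := pi_surj a.
have [w [_ wf]] : is_unit (f (s ^+ j)) by apply: is_unit_f_powers; exists j.
exists (f x * w); rewrite rmorphM phi_f; congr (_ * _).
apply: (@linv_eq_rinv _ (phi (f (s ^+ j)))); first by rewrite -rmorphM wf rmorph1.
by rewrite phi_f rmorphXn.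
Qed.

End FractionsModuloNilpotent.

Unset Implicit Arguments.
Theorem lemma2p10 (A : pzRingType) (I : A -> Prop) (s : A) :
  is_ideal I -> nilpotent_ideal I -> gr_commutative I ->
  (* (1) *)
  denominator_set (powers s) /\
  forall (As : pzRingType) (f : {rmorphism A -> As}),
    ring_of_fractions (powers s) f ->
  forall (Abar : pzRingType) (pi : {rmorphism A -> Abar}),
    (forall y : Abar, exists x, pi x = y) -> (forall x, pi x = 0 <-> I x) ->
  forall (Abars : pzRingType) (g : {rmorphism Abar -> Abars}),
    ring_of_fractions (powers (pi s)) g ->
  forall phi : {rmorphism As -> Abars}, (forall x, phi (f x) = g (pi x)) ->
  (* (2) *)
  ((forall y : Abars, exists x, phi x = y) /\
   (forall x, phi x = 0 <-> right_ext f I x) /\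
   (forall x, phi x = 0 <-> left_ext f I x) /\
   is_ideal (fun x => phi x = 0) /\ nilpotent_ideal (fun x => phi x = 0)) /\
  (* (3) *)
  (forall a : A, is_unit (f a) <-> is_unit (g (pi a))).
Proof.
move=> HI [N HN] Hgr; split; first exact: powers_denominator_set HI HN Hgr.
move=> As f Hf Abar pi pi_surj pi_ker Abars g Hg phi phi_f.
have kerE := ker_phi HI HN Hgr Hf pi_surj pi_ker Hg phi_f.
have phi_onto := phi_surj Hf pi_surj Hg phi_f.
have ker_nil := ker_phi_nilpotent HI HN Hgr Hf pi_surj pi_ker Hg phi_f.
split.
  do 2 split => //; split.
    move=> x; rewrite kerE.
    split; [exact: (right_ext_sub_left HI HN Hgr Hf) | exact: (left_ext_sub_right HI HN Hgr Hf)].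
  by split; [apply: is_ideal_kernel | exists N].
move=> a; rewrite -phi_f; split; first exact: is_unit_rmorph.
by apply: is_unit_lift phi_onto _ _ => z phiz; exists N; apply/ker_nil/ipowX.
Qed.
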